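(* Let $F$ be a field, $A\in\mathrm{Pan}(m,F)$ and $B\in\mathrm{Pan}(n,F)$. Then the Kronecker product $A\,\dot\times\, B$ lies in $\mathrm{Pan}(mn,F)$ and $\mu(A\,\dot\times\, B)=\mu(A)\mu(B)$.
   Context: $\Omega_n=\{0,\dots,n-1\}$ indexes rows and columns of $n\times n$ matrices. The $k$th upward (resp. downward) diagonal of an $n\times n$ matrix consists of positions $(i,j)$ with $i+j\equiv k$ (resp. $i-j\equiv k$) $\pmod n$. An $n\times n$ matrix over $F$ is panmagic if the sums of its entries along all rows, columns, upward diagonals and downward diagonals are equal; this common sum is its magic number $\mu$. $\mathrm{Pan}(n,F)$ denotes the set of $n\times n$ panmagic matrices over $F$. For $A=[a_{i,j}]_{i,j\in\Omega_m}$ and $B=[b_{r,s}]_{r,s\in\Omega_n}$, the Kronecker product $A\,\dot\times\,B$ is the $mn\times mn$ matrix whose $(in+r,\,jn+s)$ entry is $a_{i,j}b_{r,s}$ for $i,j\in\Omega_m$, $r,s\in\Omega_n$. *)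

From HB Require Import structures.
From mathcomp Require Import all_boot all_order all_algebra.
Set Implicit Arguments. Unset Strict Implicit. Unset Printing Implicit Defensive.
Import GRing.Theory.
Local Open Scope ring_scope.

(* A is panmagic with magic number mu: every row, column, upward diagonal
   {(i,j) | i+j = k mod n} and downward diagonal {(i,j) | i-j = k mod n}
   sums to mu. *)
Definition panmagic_with (F : fieldType) (n : nat) (A : 'M[F]_n) (mu : F) : Prop :=
  [/\ forall i : 'I_n, \sum_(j < n) A i j = mu,
      forall j : 'I_n, \sum_(i < n) A i j = mu,
      forall k : 'I_n, \sum_(i < n) \sum_(j < n | ((i + j) %% n == k)%N) A i j = mu
    & forall k : 'I_n, \sum_(i < n) \sum_(j < n | ((i + (n - j)) %% n == k)%N) A i j = mu].

Definition panmagic (F : fieldType) (n : nat) (A : 'M[F]_n) : Prop :=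
  exists mu, panmagic_with A mu.

Lemma kron_hi_proof (m n : nat) (k : 'I_(m * n)) : (k %/ n < m)%N.
Proof.
case: k => k /=; case: n => [|n]; first by rewrite muln0.
by rewrite ltn_divLR.
Qed.

Lemma kron_lo_proof (m n : nat) (k : 'I_(m * n)) : (k %% n < n)%N.
Proof.
case: k => k /=; case: n => [|n]; first by rewrite muln0.
by rewrite ltn_mod.
Qed.

Definition kron_hi (m n : nat) (k : 'I_(m * n)) : 'I_m := Ordinal (kron_hi_proof k).
Definition kron_lo (m n : nat) (k : 'I_(m * n)) : 'I_n := Ordinal (kron_lo_proof k).

Definition kron (F : fieldType) (m n : nat) (A : 'M[F]_m) (B : 'M[F]_n) : 'M[F]_(m * n) :=
  \matrix_(k, l) (A (kron_hi k) (kron_hi l) * B (kron_lo k) (kron_lo l)).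

(* Write the indices of the product as i * n + r.  A row or column sum of the
   product factors as the product of a row (column) sum of A and one of B.  On
   a diagonal of the product the index i * n + r + (j * n + s) splits as
   (i + j) * n + (r + s), so modulo m * n the diagonal condition says that
   r + s lies on a fixed diagonal of B, and that i + j, shifted by the carry
   (r + s) %/ n, lies on a fixed diagonal of A.  Shifting a family of
   diagonals only permutes it, so for every (r, s) the A-part sums to mu(A),
   and the remaining sum over a diagonal of B gives mu(B). *)
From mathcomp Require Import all_boot all_order all_algebra.
From mathcomp Require Import zify.
Set Implicit Arguments. Unset Strict Implicit. Unset Printing Implicit Defensive.
Import GRing.Theory.
Local Open Scope ring_scope.

Section KronIndex.

Variables m n : nat.

Lemma kron_idx_proof (i : 'I_m) (r : 'I_n) : (i * n + r < m * n)%N.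
Proof.
have : (i.+1 * n <= m * n)%N := leq_mul (ltn_ord i) (leqnn n).
by rewrite mulSn; move: (ltn_ord r); lia.
Qed.

Definition kron_idx (i : 'I_m) (r : 'I_n) : 'I_(m * n) :=
  Ordinal (kron_idx_proof i r).

Lemma kron_hi_idx i r : kron_hi (kron_idx i r) = i.
Proof.
apply: val_inj => /=; have n_gt0 : (0 < n)%N by case: (n) r => [[]|].
by rewrite divnMDl // divn_small // addn0.
Qed.

Lemma kron_lo_idx i r : kron_lo (kron_idx i r) = r.
Proof. by apply: val_inj => /=; rewrite modnMDl modn_small. Qed.

Lemma kron_idx_hi_lo (k : 'I_(m * n)) : kron_idx (kron_hi k) (kron_lo k) = k.
Proof. by apply: val_inj => /=; rewrite -divn_eq. Qed.

Lemma big_kron_idx (V : nmodType) (G : 'I_(m * n) -> V) :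
  \sum_(k < m * n) G k = \sum_(i < m) \sum_(r < n) G (kron_idx i r).
Proof.
pose h (p : 'I_m * 'I_n) := kron_idx p.1 p.2.
have h_bij : bijective h.
  exists (fun k => (kron_hi k, kron_lo k)) => [[i r]|k].
    by rewrite /h kron_hi_idx kron_lo_idx.
  exact: kron_idx_hi_lo.
by rewrite (reindex h) ?pair_big //; apply: onW_bij.
Qed.

End KronIndex.

Lemma modn_mulDl_eq m n x y k : (0 < n)%N -> (k < m * n)%N ->
  ((x * n + y) %% (m * n) == k)%N
  = (y %% n == k %% n)%N && ((x + y %/ n) %% m == k %/ n)%N.
Proof.
move=> n_gt0 k_lt; set X := (x * n + y)%N.
have X_modn : (X %% (m * n) %% n = y %% n)%N.
  by rewrite (modn_dvdm X (dvdn_mull m (dvdnn n))) modnMDl.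
have X_divn : (X %% (m * n) %/ n = (x + y %/ n) %% m)%N.
  by rewrite divn_modl ?dvdn_mull // mulnK // divnMDl.
apply/eqP/andP => [<-|[/eqP y_k /eqP x_k]]; first by rewrite X_modn X_divn.
by rewrite (divn_eq (X %% (m * n)) n) (divn_eq k n) X_modn X_divn y_k x_k.
Qed.

Lemma modn_addr_eq m x t k : (k < m)%N ->
  ((x + t) %% m == k)%N = (x %% m == (k + (m - t %% m)) %% m)%N.
Proof.
move=> k_lt; have m_gt0 : (0 < m)%N by case: (m) k_lt.
rewrite -[in LHS](modn_small k_lt) -(eqn_modDr t x) -addnA.
have -> : (m - t %% m + t = (t %/ m).+1 * m)%N.
  rewrite mulSn; have := divn_eq t m; have := ltn_pmod t m_gt0; lia.
by rewrite [(k + _)%N]addnC modnMDl.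
Qed.

Definition line_sum (V : nmodType) m (A : 'M[V]_m) (f : 'I_m -> 'I_m -> nat)
    (k : nat) : V :=
  \sum_(i < m) \sum_(j < m | (f i j %% m == k)%N) A i j.

Lemma line_sum_shift (V : nmodType) m (A : 'M[V]_m) f mu t :
  (forall k : 'I_m, line_sum A f k = mu) ->
  forall k : 'I_m, line_sum A (fun i j => f i j + t)%N k = mu.
Proof.
move=> f_mu k; have m_gt0 : (0 < m)%N by case: (m) k => [[]|].
rewrite -(f_mu (Ordinal (ltn_pmod (k + (m - t %% m)) m_gt0))).
by apply: eq_bigr => i _; apply: eq_bigl => j; rewrite modn_addr_eq.
Qed.

Section KronSums.

Variables (F : fieldType) (m n : nat) (A : 'M[F]_m) (B : 'M[F]_n).

Lemma kron_idxE i r j s : kron A B (kron_idx i r) (kron_idx j s) = A i j * B r s.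
Proof. by rewrite mxE !kron_hi_idx !kron_lo_idx. Qed.

Lemma kron_row_sum (k : 'I_(m * n)) :
  \sum_(l < m * n) kron A B k l
  = (\sum_(j < m) A (kron_hi k) j) * \sum_(s < n) B (kron_lo k) s.
Proof.
rewrite -[k]kron_idx_hi_lo big_kron_idx big_distrlr /= kron_hi_idx kron_lo_idx.
by apply: eq_bigr => j _; apply: eq_bigr => s _; rewrite kron_idxE.
Qed.

Lemma kron_col_sum (l : 'I_(m * n)) :
  \sum_(k < m * n) kron A B k l
  = (\sum_(i < m) A i (kron_hi l)) * \sum_(r < n) B r (kron_lo l).
Proof.
rewrite -[l]kron_idx_hi_lo big_kron_idx big_distrlr /= kron_hi_idx kron_lo_idx.
by apply: eq_bigr => i _; apply: eq_bigr => r _; rewrite kron_idxE.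
Qed.

Variables (fA : 'I_m -> 'I_m -> nat) (fB : 'I_n -> 'I_n -> nat).
Variables (f : 'I_(m * n) -> 'I_(m * n) -> nat) (c : nat).
(* The offset [c * n] is needed for downward diagonals, where
   [i * n + r + (m * n - (j * n + s)) + n = (i + (m - j)) * n + (r + (n - s))]. *)
Hypothesis f_split : forall i r j s,
  (f (kron_idx i r) (kron_idx j s) + c * n = fA i j * n + fB r s)%N.

Lemma line_sum_kron (k : 'I_(m * n)) (k' := ((k + c * n) %% (m * n))%N) :
  line_sum (kron A B) f k
  = \sum_(r < n) \sum_(s < n | (fB r s %% n == k' %% n)%N)
      line_sum A (fun i j => fA i j + fB r s %/ n)%N (k' %/ n) * B r s.
Proof.
have mn_gt0 : (0 < m * n)%N by apply: leq_ltn_trans (ltn_ord k).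
have k'_lt : (k' < m * n)%N by rewrite ltn_pmod.
have /andP[_ n_gt0] : (0 < m)%N && (0 < n)%N by rewrite -muln_gt0.
set b1 := fun r s => (fB r s %% n == k' %% n)%N.
set b2 := fun r s i j => ((fA i j + fB r s %/ n) %% m == k' %/ n)%N.
have split_cond i r j s :
    (f (kron_idx i r) (kron_idx j s) %% (m * n) == k)%N = b1 r s && b2 r s i j.
  by rewrite -(modn_small (ltn_ord k)) -(eqn_modDr (c * n)) f_split modn_mulDl_eq.
rewrite /line_sum big_kron_idx.
transitivity (\sum_(i < m) \sum_(r < n) \sum_(j < m) \sum_(s < n)
    if b1 r s then (if b2 r s i j then A i j else 0) * B r s else 0).
  apply: eq_bigr => i _; apply: eq_bigr => r _.
  rewrite big_mkcond big_kron_idx; apply: eq_bigr => j _; apply: eq_bigr => s _.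
  by rewrite split_cond kron_idxE; case: (b1 r s); case: (b2 r s i j); rewrite ?mul0r.
rewrite exchange_big; apply: eq_bigr => r _.
under eq_bigr do rewrite exchange_big /=.
rewrite exchange_big [RHS]big_mkcond; apply: eq_bigr => s _.
rewrite -/(b1 r s); case: (b1 r s); last by rewrite big1 // => i _; rewrite big1.
by rewrite mulr_suml; apply: eq_bigr => i _; rewrite -mulr_suml [in RHS]big_mkcond.
Qed.

Lemma kron_line_sum muA muB :
  (forall k : 'I_m, line_sum A fA k = muA) ->
  (forall k : 'I_n, line_sum B fB k = muB) ->
  forall k : 'I_(m * n), line_sum (kron A B) f k = muA * muB.
Proof.
move=> A_mu B_mu k; rewrite line_sum_kron.
set k' := ((k + c * n) %% (m * n))%N.
have /andP[m_gt0 n_gt0] : (0 < m)%N && (0 < n)%N.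
  by rewrite -muln_gt0; apply: leq_ltn_trans (ltn_ord k).
have k'_hi : (k' %/ n < m)%N by rewrite ltn_divLR // ltn_pmod // muln_gt0 m_gt0.
have A_shift := line_sum_shift _ A_mu (Ordinal k'_hi).
under eq_bigr => r _ do under eq_bigr => s _ do rewrite A_shift.
rewrite -(B_mu (Ordinal (ltn_pmod k' n_gt0))) mulr_sumr.
by apply: eq_bigr => r _; rewrite mulr_sumr.
Qed.

End KronSums.

Theorem corollary3p1 (F : fieldType) (m n : nat) (A : 'M[F]_m) (B : 'M[F]_n)
  (muA muB : F) :
  panmagic_with A muA -> panmagic_with B muB ->
  panmagic (kron A B) /\ panmagic_with (kron A B) (muA * muB).
Proof.
move=> [rowA colA upA downA] [rowB colB upB downB].
suff AB_mu : panmagic_with (kron A B) (muA * muB) by split; first exists (muA * muB).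
split=> [k|l||].
- by rewrite kron_row_sum rowA rowB.
- by rewrite kron_col_sum colA colB.
- apply: (@kron_line_sum _ _ _ A B (fun i j => i + j)%N (fun r s => r + s)%N
            (fun k l => k + l)%N 0) => // i r j s /=.
  by rewrite mulnDl; lia.
- apply: (@kron_line_sum _ _ _ A B (fun i j => i + (m - j))%N (fun r s => r + (n - s))%N
            (fun k l => k + (m * n - l))%N 1) => // i r j s /=.
  have : (j.+1 * n <= m * n)%N := leq_mul (ltn_ord j) (leqnn n).
  by rewrite mulnDl mulnBl mulSn; move: (ltn_ord s); lia.
Qed.
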